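(* Let $\{f(x;\theta)\}_{\theta\in\Theta}$ be an affine exponential family (defined in the context) with log-normalizer $F$. Let $p(x)=f(x;\theta)$ and $q_u(x)=f(x;\theta_u)$, $u=1,\dots,l$, be members of this family, let $w_1,\dots,w_l>0$ with $\sum_{u=1}^l w_u=1$, and let $\lambda\neq 0$ and an integer $i\geq 2$ be given. Then the power chi pseudo-distance between $p$ and the mixture $\sum_{u=1}^l w_uq_u$ is finite and given by the closed-form finite expression $$ \chi_{i,\lambda}^\pm\Big(p:\sum_{u=1}^{l} w_u q_u\Big)=\sum_{s=0}^i \binom{i}{s}(-\lambda)^{i-s}\sum_{\substack{\alpha_1+\dots+\alpha_l=s\\ \alpha_u\in\mathbb{N}\cup\{0\}}}\binom{s}{\alpha_1,\ldots,\alpha_l}\Big(\prod_{u=1}^l w_u^{\alpha_u}\Big)\exp\Big(F\Big((1-s)\theta+\sum_{u=1}^l\alpha_u\theta_u\Big)-\Big((1-s)F(\theta)+\sum_{u=1}^l\alpha_uF(\theta_u)\Big)\Big). $$ In particular, it can be computed in closed form from $F$, the parameters, the weights and $\lambda$.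
   Context: Let $\mu$ be a $\sigma$-finite positive base measure on a measurable space $\mathcal{X}$. An exponential family is a set of probability densities (w.r.t. $\mu$) of the form $f(x;\theta)=\exp(t(x)^\top\theta-F(\theta)+k(x))\,1_{\mathcal{X}}(x)$, with sufficient statistic $t:\mathcal{X}\to\mathbb{R}^D$, carrier term $k$, natural parameter $\theta$ in the natural parameter space $\Theta=\{\theta\in\mathbb{R}^D:\int \exp(t(x)^\top\theta+k(x))\,d\mu(x)<\infty\}$, and log-normalizer $F(\theta)=\log\int\exp(t(x)^\top\theta+k(x))\,d\mu(x)$. It is called an affine exponential family if its natural parameter space $\Theta$ is affine (closed under affine combinations, e.g. $\Theta=\mathbb{R}^D$), as for the Poisson, categorical, isotropic Gaussian and von Mises–Fisher families. For densities $p,r$ and $\lambda\neq0$, integer $i\ge2$, the power chi pseudo-distance is $\chi_{i,\lambda}^\pm(p:r)=\int \frac{(r(x)-\lambda p(x))^i}{p(x)^{i-1}}\,d\mu(x)$; here $(-\lambda)^j$ is the usual integer power. $\binom{s}{\alpha_1,\ldots,\alpha_l}$ denotes the multinomial coefficient. *)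

From HB Require Import structures.
From mathcomp Require Import all_boot all_order all_algebra.
From mathcomp Require Import all_classical all_reals all_analysis.
Set Implicit Arguments. Unset Strict Implicit. Unset Printing Implicit Defensive.
Import Order.TTheory GRing.Theory Num.Theory.
Local Open Scope classical_set_scope.
Local Open Scope ring_scope.

Definition dotv (R : realType) (D : nat) (u v : 'rV[R]_D) : R :=
  \sum_(j < D) u 0 j * v 0 j.

Definition unnorm (R : realType) (d : measure_display) (T : measurableType d)
  (D : nat) (t : T -> 'rV[R]_D) (k : T -> R) (theta : 'rV[R]_D) (x : T) : R :=
  expR (dotv (t x) theta + k x).

Definition natural_param_space (R : realType) (d : measure_display)
  (T : measurableType d) (mu : {measure set T -> \bar R})
  (D : nat) (t : T -> 'rV[R]_D) (k : T -> R) : set 'rV[R]_D :=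
  [set theta | (\int[mu]_x (unnorm t k theta x)%:E < +oo)%E].

Definition log_normalizer (R : realType) (d : measure_display)
  (T : measurableType d) (mu : {measure set T -> \bar R})
  (D : nat) (t : T -> 'rV[R]_D) (k : T -> R) (theta : 'rV[R]_D) : R :=
  ln (fine (\int[mu]_x (unnorm t k theta x)%:E)).

Definition expfam_density (R : realType) (d : measure_display)
  (T : measurableType d) (mu : {measure set T -> \bar R})
  (D : nat) (t : T -> 'rV[R]_D) (k : T -> R) (theta : 'rV[R]_D) (x : T) : R :=
  expR (dotv (t x) theta - log_normalizer mu t k theta + k x).

(* closed under (two-point, hence all finite) affine combinations *)
Definition affine_set (R : realType) (D : nat) (A : set 'rV[R]_D) : Prop :=
  forall (a : R) th1 th2, A th1 -> A th2 -> A ((1 - a) *: th1 + a *: th2).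

Definition power_chi (R : realType) (d : measure_display) (T : measurableType d)
  (mu : {measure set T -> \bar R}) (i : nat) (lam : R) (p r : T -> R) : \bar R :=
  \int[mu]_x ((r x - lam * p x) ^+ i / p x ^+ (i - 1))%:E.

Definition multinomial_coef (R : realType) (l s : nat) (alpha : 'I_l -> nat) : R :=
  (s`!)%:R / \prod_(u < l) ((alpha u)`!)%:R.

(* Expand (r - lam p)^i by the binomial theorem and each power r^s of the
   mixture by the multinomial theorem.  Inside an exponential family the
   monomial q_1^a_1 ... q_l^a_l p^(1-s) (with a_1 + ... + a_l = s) equals
   exp(-((1-s) F(theta) + sum_u a_u F(theta_u))) times the unnormalized density
   at the affine combination (1-s) theta + sum_u a_u theta_u.  That point lies
   in the natural parameter space because the space is affine, so the
   unnormalized density there is integrable with integral exp F(...).  The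
   integrand is thus a finite linear combination of integrable functions. *)

From HB Require Import structures.
From mathcomp Require Import all_boot all_order all_algebra.
From mathcomp Require Import all_classical all_reals all_analysis.
From mathcomp Require Import measurable_realfun ring zify.
Import Order.TTheory GRing.Theory Num.Theory.
Local Open Scope classical_set_scope.
Local Open Scope ring_scope.

Section Multinomial.
Context {l N : nat}.
Implicit Types (a b : {ffun 'I_l -> 'I_N.+1}) (u v : 'I_l).

Definition ffun_incr u a : {ffun 'I_l -> 'I_N.+1} :=
  [ffun v => if v == u then inord (a v).+1 else a v].
Definition ffun_decr u a : {ffun 'I_l -> 'I_N.+1} :=
  [ffun v => if v == u then inord (a v).-1 else a v].

Lemma ffun_incr_at u a : (a u < N)%N -> ffun_incr u a u = (a u).+1 :> nat.
Proof. by move=> aN; rewrite ffunE eqxx inordK. Qed.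

(* [inord] sends out-of-range values to [0]. *)
Lemma ffun_incr_at_max u a : (N <= a u)%N -> ffun_incr u a u = 0%N :> nat.
Proof.
move=> Na; rewrite ffunE eqxx /inord /insubd insubF //.
by apply/negbTE; have := ltn_ord (a u); lia.
Qed.

Lemma ffun_incr_neq u v a : v != u -> ffun_incr u a v = a v.
Proof. by move=> /negbTE vu; rewrite ffunE vu. Qed.

Lemma ffun_decrK u b : (0 < b u)%N -> ffun_incr u (ffun_decr u b) = b.
Proof.
move=> bu; apply/ffunP => v; rewrite !ffunE; case: eqP => [->|//].
apply/val_inj => /=; have := ltn_ord (b u) => bN.
rewrite (@inordK N (b u).-1); last lia.
by rewrite prednK // inordK.
Qed.

Lemma ffun_incrK u a : (a u < N)%N -> ffun_decr u (ffun_incr u a) = a.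
Proof.
move=> aN; apply/ffunP => v; rewrite ffunE; case: (eqVneq v u) => [->|vu].
  by apply/val_inj; rewrite /= ffun_incr_at // inordK //=; lia.
exact: ffun_incr_neq.
Qed.

Lemma ffun_incr_sum u a : (a u < N)%N ->
  (\sum_v ffun_incr u a v = (\sum_v a v).+1)%N.
Proof.
move=> aN; rewrite (bigD1 u) //= [in RHS](bigD1 u) //= ffun_incr_at // addSn.
by congr (_.+1 + _)%N; apply: eq_bigr => v vu; rewrite ffun_incr_neq.
Qed.

Lemma ffun_incr_prod (R : comRingType) u a (F : 'I_l -> nat -> R) : (a u < N)%N ->
  \prod_v F v (ffun_incr u a v) = F u (a u).+1 * \prod_(v | v != u) F v (a v).
Proof.
move=> aN; rewrite (bigD1 u) //= ffun_incr_at //; congr (_ * _).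
by apply: eq_bigr => v vu; rewrite ffun_incr_neq.
Qed.

Lemma multinomial_coefS (R : realType) s a : (\sum_v a v)%N = s.+1 ->
  multinomial_coef R s.+1 (fun v => a v) =
  \sum_u (a u)%:R * multinomial_coef R s (fun v => a v).
Proof.
by move=> sa; rewrite -big_distrl /= -natr_sum sa /multinomial_coef factS natrM mulrA.
Qed.

Lemma multinomial_coef_incr (R : realType) u s a :
  (\sum_v a v)%N = s -> (a u < N)%N ->
  (ffun_incr u a u)%:R * multinomial_coef R s (fun v => ffun_incr u a v) =
  multinomial_coef R s (fun v => a v).
Proof.
move=> sa aN; rewrite /multinomial_coef ffun_incr_at //.
rewrite (@ffun_incr_prod R u a (fun _ n => n`!%:R)) // [in RHS](bigD1 u) //=.
have fact_neq0 n : (n`!%:R : R) != 0 by rewrite pnatr_eq0 -lt0n fact_gt0.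
have prod_neq0 : \prod_(v | v != u) ((a v)`!%:R : R) != 0.
  by rewrite prodf_seq_neq0; apply/allP => v _; apply/implyP => _.
rewrite factS natrM; field.
by rewrite prod_neq0 fact_neq0 addrC natr1 pnatr_eq0.
Qed.

(* The bound [N >= s] on the exponents lets the induction on [s] stay in one
   index type; the theorem is used with [N = s]. *)
Lemma multinomial_theorem {R : realType} (y : 'I_l -> R) s : (s <= N)%N ->
  (\sum_u y u) ^+ s =
  \sum_(a : {ffun 'I_l -> 'I_N.+1} | (\sum_u a u)%N == s)
    multinomial_coef R s (fun u => a u) * \prod_u y u ^+ a u.
Proof.
elim: s => [_|s IH sN].
  rewrite expr0 (big_pred1 [ffun => ord0]); last first.
    move=> a /=; rewrite sum_nat_eq0; apply/forallP/eqP => [a0|->].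
      by apply/ffunP => v; rewrite ffunE; apply/val_inj/eqP/a0.
    by move=> v; rewrite ffunE.
  by rewrite /multinomial_coef !big1 ?divr1 ?mul1r // => v _; rewrite ffunE ?expr0.
rewrite exprS (IH (ltnW sN)) big_distrl /=.
under eq_bigr do rewrite big_distrr /=.
under [RHS]eq_bigr => b /eqP sb do rewrite multinomial_coefS // big_distrl /=.
rewrite [RHS]exchange_big /=; apply: eq_bigr => u _.
rewrite [RHS](bigID (fun b => (0 < b u)%N)) /= [X in _ + X]big1 ?addr0; last first.
  by move=> b /andP[_]; rewrite lt0n negbK => /eqP ->; rewrite !mul0r.
rewrite [RHS](reindex_onto (ffun_incr u) (ffun_decr u)) /=; last first.
  by move=> b /andP[_]; exact: ffun_decrK.
have le_sum a : (a u <= \sum_v a v)%N by rewrite (bigD1 u) //= leq_addr.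
apply: eq_big => a.
  case: (ltnP (a u) N) => aN.
    by rewrite ffun_incr_sum // ffun_incr_at // ffun_incrK // eqxx eqSS !andbT.
  rewrite ffun_incr_at_max //= andbF; apply/negbTE/eqP => sa.
  by have := le_sum a; rewrite sa; lia.
move=> /eqP sa; have aN : (a u < N)%N by have := le_sum a; rewrite sa; lia.
rewrite multinomial_coef_incr // (@ffun_incr_prod R u a (fun v n => y v ^+ n)) //.
rewrite [in LHS](bigD1 u) //= exprS; ring.
Qed.
End Multinomial.

Lemma mixture_power_expand {R : realType} l i (lam P : R) (w q : 'I_l -> R) :
  ((\sum_u w u * q u) - lam * P) ^+ i / P ^+ (i - 1) =
  \sum_(s < i.+1) 'C(i, s)%:R * (- lam) ^+ (i - s) *
    \sum_(a : {ffun 'I_l -> 'I_s.+1} | (\sum_u (a u : nat))%N == s)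
      multinomial_coef R s (fun u => a u) * \prod_u w u ^+ a u *
      (\prod_u q u ^+ a u * (P ^+ (i - s) / P ^+ (i - 1))).
Proof.
rewrite addrC -mulNr exprDn mulr_suml; apply: eq_bigr => s _.
rewrite (multinomial_theorem (fun u => w u * q u) _ (leqnn s)).
rewrite -mulr_natl exprMn !big_distrr big_distrl /=.
apply: eq_bigr => a _; under eq_bigr do rewrite exprMn.
rewrite big_split /=; ring.
Qed.

Section RealIntegral.
Context {d} {T : measurableType d} {R : realType} (mu : {measure set T -> \bar R}).
Implicit Types (f g : T -> R) (c v : R).

Definition is_integral f v :=
  mu.-integrable setT (EFin \o f) /\ (\int[mu]_x (f x)%:E = v%:E)%E.

Lemma is_integral0 : is_integral (fun=> 0) 0.
Proof. by split; [exact: integrable0 | exact: integral0]. Qed.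

Lemma is_integralD f g v1 v2 : is_integral f v1 -> is_integral g v2 ->
  is_integral (fun x => f x + g x) (v1 + v2).
Proof.
move=> [if1 If1] [ig Ig]; split; first exact: (integrableD measurableT if1 ig).
by rewrite EFinD -If1 -Ig -integralD.
Qed.

Lemma is_integralZ c f v : is_integral f v -> is_integral (fun x => c * f x) (c * v).
Proof.
move=> [iff If]; split; first exact: (integrableZl measurableT c iff).
by under eq_integral do rewrite EFinM; rewrite integralZl // If.
Qed.

Lemma is_integral_sum I (r : seq I) (P : pred I) (F : I -> T -> R) (V : I -> R) :
  (forall j, P j -> is_integral (F j) (V j)) ->
  is_integral (fun x => \sum_(j <- r | P j) F j x) (\sum_(j <- r | P j) V j).
Proof.
move=> IF; elim: r => [|j r IH].
  by under eq_fun do rewrite big_nil; rewrite big_nil; exact: is_integral0.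
under eq_fun do rewrite big_cons; rewrite big_cons.
by case: ifP => // Pj; apply: is_integralD => //; exact: IF.
Qed.

Lemma integral_gt0 f : (0 < mu setT)%E -> measurable_fun setT f ->
  (forall x, 0 < f x) -> (0 < \int[mu]_x (f x)%:E)%E.
Proof.
move=> mu_gt0 mf f_gt0.
have If_ge0 : (0 <= \int[mu]_x (f x)%:E)%E.
  by apply: integral_ge0 => x _; rewrite lee_fin ltW.
rewrite lt_neqAle If_ge0 andbT; apply/negP => /eqP /esym If0.
have : (\int[mu]_x `|(f x)%:E| = 0)%E.
  by rewrite -If0; apply: eq_integral => x _; rewrite gee0_abs // lee_fin ltW.
have mEf : measurable_fun setT (EFin \o f) by exact/measurable_EFinP.
move/(ae_eq_integral_abs mu measurableT mEf) => -[N [mN muN0 sub]].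
have mu0 : mu setT = 0%E.
  apply: (subset_measure0 measurableT mN _ muN0) => x _; apply: sub => /= f0.
  by have := f_gt0 x; rewrite -lte_fin (f0 I) ltxx.
by move: mu_gt0; rewrite mu0 ltxx.
Qed.

End RealIntegral.

Section InnerProduct.
Context {R : realType} {D : nat}.
Implicit Types (u v : 'rV[R]_D) (c : R).

Lemma dotvD u v1 v2 : dotv u (v1 + v2) = dotv u v1 + dotv u v2.
Proof. by rewrite /dotv -big_split; apply: eq_bigr => j _; rewrite mxE mulrDr. Qed.

Lemma dotvZ u c v : dotv u (c *: v) = c * dotv u v.
Proof. by rewrite /dotv mulr_sumr; apply: eq_bigr => j _; rewrite mxE mulrCA. Qed.

Lemma dotv_sum u I (r : seq I) (P : pred I) (F : I -> 'rV[R]_D) :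
  dotv u (\sum_(j <- r | P j) F j) = \sum_(j <- r | P j) dotv u (F j).
Proof.
rewrite /dotv exchange_big /=; apply: eq_bigr => m _.
by rewrite summxE mulr_sumr.
Qed.

Lemma affine_set_comb (A : set 'rV[R]_D) I (r : seq I) (c : I -> R) v (vs : I -> 'rV[R]_D) :
  affine_set A -> A v -> (forall j, A (vs j)) ->
  A ((1 - \sum_(j <- r) c j) *: v + \sum_(j <- r) c j *: vs j).
Proof.
move=> affA Av Avs; elim: r => [|j r IH]; first by rewrite !big_nil subr0 scale1r addr0.
have := affA 2 v _ Av (affA 2^-1 _ _ IH (affA (c j) _ _ Av (Avs j))).
congr A; apply/rowP => m; rewrite !big_cons !mxE !summxE; by field.
Qed.

End InnerProduct.

Lemma expR_monomial {R : realType} l (e0 : R) (e : 'I_l -> R) (a : 'I_l -> nat) i s :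
  (\sum_u a u)%N = s -> (s <= i)%N -> (1 <= i)%N ->
  \prod_u expR (e u) ^+ a u * (expR e0 ^+ (i - s) / expR e0 ^+ (i - 1)) =
  expR ((1 - s%:R) * e0 + \sum_u (a u)%:R * e u).
Proof.
move=> sa si i_ge1.
rewrite -(expRM_natl (i - s)) -(expRM_natl (i - 1)) -expRB.
under eq_bigr => u _ do rewrite -(expRM_natl (a u)).
rewrite -expR_sum -expRD addrC; congr expR; rewrite !natrB //.
by congr (_ + _); ring.
Qed.

Section ExponentialFamily.
Context {d} {T : measurableType d} {R : realType} (mu : {measure set T -> \bar R}).
Context {D : nat} (t : T -> 'rV[R]_D) (k : T -> R).
Hypotheses (mt : forall j, measurable_fun setT (fun x => t x 0 j))
  (mk : measurable_fun setT k).

Local Notation F := (log_normalizer mu t k).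
Local Notation f := (expfam_density mu t k).

Lemma measurable_unnorm th : measurable_fun setT (unnorm t k th).
Proof.
apply: measurableT_comp; first exact: measurable_expR.
apply: measurable_funD => //; apply: measurable_sum => j.
by apply: measurable_funM => //; exact: measurable_cst.
Qed.

Lemma is_integral_unnorm th : (0 < mu setT)%E -> natural_param_space mu t k th ->
  is_integral mu (unnorm t k th) (expR (F th)).
Proof.
move=> mu_gt0 Ith_fin.
have unnorm_gt0 x : 0 < unnorm t k th x by exact: expR_gt0.
have Ith_gt0 := integral_gt0 mu _ mu_gt0 (measurable_unnorm th) unnorm_gt0.
have Ith_E : (\int[mu]_x (unnorm t k th x)%:E)%E = (expR (F th))%:E.
  rewrite /log_normalizer lnK ?posrE ?fine_gt0 ?Ith_gt0 //.
  by rewrite fineK // ge0_fin_numE // ltW.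
split => //; apply/integrableP; split; first exact/measurable_EFinP/measurable_unnorm.
rewrite (eq_integral (fun x => (unnorm t k th x)%:E)) ?Ith_E ?ltry //.
by move=> x _; rewrite gee0_abs // lee_fin ltW.
Qed.

Lemma expfam_density_monomial l th (ths : 'I_l -> 'rV[R]_D) (a : 'I_l -> nat) i s x :
  (\sum_u a u)%N = s -> (s <= i)%N -> (1 <= i)%N ->
  \prod_u f (ths u) x ^+ a u * (f th x ^+ (i - s) / f th x ^+ (i - 1)) =
  expR (- ((1 - s%:R) * F th + \sum_u (a u)%:R * F (ths u))) *
  unnorm t k ((1 - s%:R) *: th + \sum_u (a u)%:R *: ths u) x.
Proof.
move=> sa si i_ge1.
have dot_comb : dotv (t x) ((1 - s%:R) *: th + \sum_u (a u)%:R *: ths u) =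
    (1 - s%:R) * dotv (t x) th + \sum_u (a u)%:R * dotv (t x) (ths u).
  by rewrite dotvD dotvZ dotv_sum; congr (_ + _); apply: eq_bigr => u _; exact: dotvZ.
rewrite /expfam_density /unnorm dot_comb.
rewrite (expR_monomial _ (dotv (t x) th - F th + k x)
  (fun u => dotv (t x) (ths u) - F (ths u) + k x) _ _ _ sa si i_ge1) -expRD.
congr expR.
have -> : \sum_u (a u)%:R * (dotv (t x) (ths u) - F (ths u) + k x) =
    \sum_u (a u)%:R * dotv (t x) (ths u) - \sum_u (a u)%:R * F (ths u) + s%:R * k x.
  rewrite -sa natr_sum mulr_suml -sumrB -big_split /=.
  by apply: eq_bigr => u _; ring.
ring.
Qed.

End ExponentialFamily.

Theorem theorem1 (R : realType) (d : measure_display) (T : measurableType d)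
  (mu : {measure set T -> \bar R}) (D : nat) (t : T -> 'rV[R]_D) (k : T -> R)
  (l : nat) (theta : 'rV[R]_D) (thetas : 'I_l -> 'rV[R]_D) (w : 'I_l -> R)
  (lam : R) (i : nat) :
  sigma_finite setT mu ->
  (0 < mu setT)%E ->
  (forall j : 'I_D, measurable_fun setT (fun x => t x 0 j)) ->
  measurable_fun setT k ->
  affine_set (natural_param_space mu t k) ->
  natural_param_space mu t k theta ->
  (forall u, natural_param_space mu t k (thetas u)) ->
  (forall u, 0 < w u) -> \sum_(u < l) w u = 1 ->
  lam != 0 -> (2 <= i)%N ->
  let F := log_normalizer mu t k in
  let p := expfam_density mu t k theta in
  let r := fun x => \sum_(u < l) w u * expfam_density mu t k (thetas u) x in
  mu.-integrable setT (fun x => ((r x - lam * p x) ^+ i / p x ^+ (i - 1))%:E) /\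
  power_chi mu i lam p r =
  (\sum_(s < i.+1) 'C(i, s)%:R * (- lam) ^+ (i - s) *
     \sum_(a : {ffun 'I_l -> 'I_s.+1} | (\sum_(u < l) (a u : nat))%N == s)
        multinomial_coef R s (fun u => (a u : nat)) *
        (\prod_(u < l) w u ^+ a u) *
        expR (F ((1 - s%:R) *: theta + \sum_(u < l) (a u)%:R *: thetas u)
              - ((1 - s%:R) * F theta + \sum_(u < l) (a u)%:R * F (thetas u))))%:E.
Proof.
move=> _ mu_gt0 mt mk affTheta Theta_th Theta_ths _ _ _ i_ge2 F p r.
pose th' s (a : 'I_l -> nat) := (1 - s%:R) *: theta + \sum_u (a u)%:R *: thetas u.
pose B s (a : 'I_l -> nat) := (1 - s%:R) * F theta + \sum_u (a u)%:R * F (thetas u).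
have Theta_th' s a : (\sum_u a u)%N = s -> natural_param_space mu t k (th' s a).
  by move=> sa; rewrite /th' -sa natr_sum; exact: affine_set_comb.
have integrandE x : (r x - lam * p x) ^+ i / p x ^+ (i - 1) =
    \sum_(s < i.+1) 'C(i, s)%:R * (- lam) ^+ (i - s) *
      \sum_(a : {ffun 'I_l -> 'I_s.+1} | (\sum_u (a u : nat))%N == s)
        multinomial_coef R s (fun u => a u) * \prod_u w u ^+ a u *
        (expR (- B s (fun u => a u)) * unnorm t k (th' s (fun u => a u)) x).
  rewrite mixture_power_expand; apply: eq_bigr => s _; congr (_ * _).
  apply: eq_bigr => a /eqP sa; congr (_ * _).
  by apply: expfam_density_monomial => //; [rewrite -ltnS | exact: ltnW].
(* The goal is an unfolded [is_integral] statement. *)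
apply: (@id (is_integral mu (fun x => (r x - lam * p x) ^+ i / p x ^+ (i - 1)) _)).
rewrite (funext integrandE).
apply: is_integral_sum => s _; apply: is_integralZ.
apply: is_integral_sum => a /eqP sa; apply: is_integralZ.
rewrite expRD [X in is_integral _ _ X]mulrC; apply: is_integralZ.
by apply: is_integral_unnorm => //; exact: Theta_th'.
Qed.
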